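(* For every positive integer $m$, $$\sum_{k\ge 0}(-1)^k\binom{2m}{m+3k}=3^{m-1}+\frac12\binom{2m}{m},$$ where binomial coefficients $\binom{2m}{j}$ with $j>2m$ are zero. *)

From mathcomp Require Import all_boot all_order all_algebra.

From mathcomp Require Import all_boot all_order all_algebra all_field.
From mathcomp Require Import ring lra zify.
Import GRing.Theory Num.Theory.
Local Open Scope ring_scope.

(* Let z be a primitive sixth root of unity, so that z, -1 and 1 - z = z^-1
   are the roots of X^3 + 1: their i-th power sum is 3 (-1)^k when i = 3k and 0
   otherwise.  For each root x, ((1 + x)(1 + x^-1))^m is the Laurent polynomial
   sum_j 'C(2m, m + j) x^j; summing it over the three roots filters out the
   exponents j = 3k and yields 3^m + 0 + 3^m, and the symmetry
   'C(2m, m - j) = 'C(2m, m + j) folds the terms with k < 0 onto those with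
   k > 0. *)

Lemma big_nat_mul3 (V : nmodType) (F : nat -> V) (n : nat) :
  \sum_(0 <= i < 3 * n) F i
  = \sum_(0 <= k < n) (F (3 * k)%N + F (3 * k).+1 + F (3 * k).+2).
Proof.
elim: n => [|n IHn]; first by rewrite !big_geq.
rewrite (_ : (3 * n.+1 = (3 * n).+3)%N); last by lia.
by rewrite !big_nat_recr //= IHn !addrA.
Qed.

Section BinomialTrisection.
Variable R : comPzRingType.

Lemma exprD_mul_cancel (a b : R) (n k : nat) :
  a * b = 1 -> a ^+ (n + k) * b ^+ k = a ^+ n.
Proof. by move=> ab1; rewrite exprD -mulrA -exprMn ab1 expr1n mulr1. Qed.

(* Since [1 + y = y * (1 + x)], the product is [y ^+ m * (1 + x) ^+ (2 * m)];
   the binomial terms above and below the middle one give the two halves. *)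
Lemma sum_central_binomial (x y : R) (m : nat) :
  x * y = 1 ->
  \sum_(0 <= i < m.+1) 'C(2 * m, m + i)%:R * (x ^+ i + y ^+ i)
  = ((1 + x) * (1 + y)) ^+ m + 'C(2 * m, m)%:R.
Proof.
move=> xy1; have yx1 : y * x = 1 by rewrite mulrC.
have -> : (1 + x) * (1 + y) = y * (1 + x) ^+ 2.
  by rewrite expr2 [RHS]mulrA [y * _]mulrDr mulr1 yx1 [y + 1]addrC mulrC.
rewrite exprMn -exprM [1 + x]addrC exprD1n.
rewrite -(big_mkord xpredT (fun i => x ^+ i *+ 'C(2 * m, i))) mulr_sumr.
rewrite [in RHS](big_cat_nat _ (n := m)) //=; last by lia.
rewrite (big_addn 0 _ m) (_ : ((2 * m).+1 - m = m.+1)%N); last by lia.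
rewrite [\sum_(0 <= i < m) _]big_nat_rev /=.
under eq_bigr do rewrite mulrDr.
rewrite big_split /= [RHS]addrAC [RHS]addrC; congr (_ + _).
  apply: eq_bigr => i _.
  by rewrite mulrnAr [y ^+ m * _]mulrC exprD_mul_cancel // mulr_natl addnC.
rewrite big_nat_recl // addn0 expr0 mulr1 addrC; congr (_ + _).
apply: eq_big_nat => i /andP [_ lt_i_m].
have -> : 'C(2 * m, m - i.+1) = 'C(2 * m, m + i.+1).
  by rewrite -bin_sub; [congr 'C(_, _) |]; lia.
by rewrite add0n -[in y ^+ m](subnKC lt_i_m) mulrnAr exprD_mul_cancel // mulr_natl.
Qed.

Lemma sixth_root_expr3 (w : R) :
  w ^+ 2 - w + 1 = 0 -> w ^+ 3 = -1.
Proof.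
move=> hw; apply/eqP; rewrite -subr_eq0 opprK.
have -> : w ^+ 3 + 1 = (w + 1) * (w ^+ 2 - w + 1) by ring.
by rewrite hw mulr0.
Qed.

Section SixthRootOfUnity.
Variable z : R.
Hypothesis hz : z ^+ 2 - z + 1 = 0.

Definition cbrtN1_psum (i : nat) : R := z ^+ i + (-1) ^+ i + (1 - z) ^+ i.

Lemma sixth_root_conj : (1 - z) ^+ 2 - (1 - z) + 1 = 0.
Proof. by rewrite -hz; ring. Qed.

Lemma mul_sixth_root_conj : z * (1 - z) = 1.
Proof.
have -> : z * (1 - z) = 1 - (z ^+ 2 - z + 1) by ring.
by rewrite hz subr0.
Qed.

Lemma cbrtN1_psum3D (k r : nat) :
  cbrtN1_psum (3 * k + r) = (-1) ^+ k * cbrtN1_psum r.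
Proof.
have N1_3 : (-1 : R) ^+ 3 = -1 by ring.
rewrite /cbrtN1_psum !(exprD _ (3 * k)) !exprM N1_3 (sixth_root_expr3 _ hz).
by rewrite (sixth_root_expr3 _ sixth_root_conj); ring.
Qed.

Lemma cbrtN1_psum0 : cbrtN1_psum 0 = 3.
Proof. by rewrite /cbrtN1_psum !expr0; ring. Qed.

Lemma cbrtN1_psum1 : cbrtN1_psum 1 = 0.
Proof. by rewrite /cbrtN1_psum !expr1; ring. Qed.

Lemma cbrtN1_psum2 : cbrtN1_psum 2 = 0.
Proof.
have -> : cbrtN1_psum 2 = 2 * (z ^+ 2 - z + 1) by rewrite /cbrtN1_psum; ring.
by rewrite hz mulr0.
Qed.

Lemma sum_cbrtN1_psum (g : nat -> R) (n : nat) :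
  (forall i, (n < i)%N -> g i = 0) ->
  \sum_(0 <= i < n.+1) g i * cbrtN1_psum i
  = 3 * \sum_(0 <= k < n.+1) (-1) ^+ k * g (3 * k)%N.
Proof.
move=> g_out.
have -> : \sum_(0 <= i < n.+1) g i * cbrtN1_psum i
          = \sum_(0 <= i < 3 * n.+1) g i * cbrtN1_psum i.
  rewrite [RHS](big_cat_nat _ (n := n.+1)) //=; last by lia.
  rewrite [X in _ = _ + X]big_nat_cond [X in _ = _ + X]big1 ?addr0 // => i.
  by case/andP=> /andP [lt_n_i _] _; rewrite g_out ?mul0r.
rewrite big_nat_mul3 mulr_sumr; apply: eq_bigr => k _.
rewrite -[(3 * k).+2]addn2 -[(3 * k).+1]addn1 -[X in cbrtN1_psum X](addn0 (3 * k)).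
by rewrite !cbrtN1_psum3D cbrtN1_psum0 cbrtN1_psum1 cbrtN1_psum2; ring.
Qed.

Lemma alternating_binomial_trisection (m : nat) : (0 < m)%N ->
  6 * \sum_(0 <= k < m.+1) (-1) ^+ k * 'C(2 * m, m + 3 * k)%:R
  = 2 * 3 ^+ m + 3 * 'C(2 * m, m)%:R :> R.
Proof.
move=> m_gt0; set S := \sum_(0 <= k < m.+1) _.
have binom_out i : (m < i)%N -> 'C(2 * m, m + i)%:R = 0 :> R.
  by move=> lt_m_i; rewrite bin_small //; lia.
have mulN1N1 : -1 * -1 = 1 :> R by rewrite mulrNN mulr1.
have z_norm : (1 + z) * (1 + (1 - z)) = 3.
  have -> : (1 + z) * (1 + (1 - z)) = 3 - (z ^+ 2 - z + 1) by ring.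
  by rewrite hz subr0.
have psum_split : 2 * \sum_(0 <= i < m.+1) 'C(2 * m, m + i)%:R * cbrtN1_psum i
  = 2 * \sum_(0 <= i < m.+1) 'C(2 * m, m + i)%:R * (z ^+ i + (1 - z) ^+ i)
    + \sum_(0 <= i < m.+1) 'C(2 * m, m + i)%:R * ((-1) ^+ i + (-1) ^+ i).
  rewrite !mulr_sumr -big_split; apply: eq_bigr => i _ /=; rewrite /cbrtN1_psum; ring.
rewrite (sum_cbrtN1_psum _ _ binom_out) in psum_split.
rewrite (sum_central_binomial _ _ _ mul_sixth_root_conj) in psum_split.
rewrite (sum_central_binomial _ _ _ mulN1N1) in psum_split.
rewrite z_norm subrr mul0r expr0n gtn_eqF // in psum_split.
transitivity (2 * (3 * S)); first by ring.
by rewrite psum_split /=; ring.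
Qed.

End SixthRootOfUnity.
End BinomialTrisection.

Lemma exists_sixth_root_of_unity : exists z : algC, z ^+ 2 - z + 1 = 0.
Proof.
exists ((1 + sqrtC (-3)) / 2).
have -> : ((1 + sqrtC (-3)) / 2) ^+ 2 - (1 + sqrtC (-3)) / 2 + 1
          = (sqrtC (-3) ^+ 2 + 3) / 4 :> algC by field.
by rewrite sqrtCK addNr mul0r.
Qed.

Theorem lemma5 (m : nat) (hm : (0 < m)%N) :
  \sum_(0 <= k < m.+1) (-1 : rat) ^+ k * ('C(2 * m, m + 3 * k))%:R
  = (3 : rat) ^+ (m - 1) + (1 / 2) * ('C(2 * m, m))%:R.
Proof.
have [z hz] := exists_sixth_root_of_unity.
have trisect : 6 * \sum_(0 <= k < m.+1) (-1 : rat) ^+ k * 'C(2 * m, m + 3 * k)%:R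
       = 2 * 3 ^+ m + 3 * 'C(2 * m, m)%:R.
  apply: (fmorph_inj (@ratr algC)).
  rewrite !rmorphD !rmorphM rmorph_sum !rmorphXn !rmorph_nat.
  rewrite -(alternating_binomial_trisection _ _ hz _ hm); congr (_ * _).
  by apply: eq_bigr => k _; rewrite rmorphM rmorphXn rmorphN1 rmorph_nat.
case: m hm trisect => // m _; rewrite subSS subn0 exprS => trisect.
lra.
Qed.
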